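(* For every natural number $\alpha<\omega$, \[ f_{\omega^{\omega^\alpha}}\in d_{1/2}^{\omega^{1+\alpha}}\Big(B_{\ell_1([0,\omega^{\omega^\alpha}])}\Big). \]
   Context: Ordinal arithmetic throughout. For an ordinal $\gamma$, $[0,\gamma]$ has the order topology and $\ell_1([0,\gamma])$ is identified with $C([0,\gamma])^*$ (weak$^*$-topology accordingly). For $\beta\le\gamma$, $f_\beta\in\ell_1([0,\gamma])$ is the indicator of $\{\beta\}$. For a weak$^*$-compact $K$ in a dual $X^*$: $H(x,t)=\{x^*: x^*(x)>t\}$; a weak$^*$-slice of $K$ is a nonempty $H(x,t)\cap K$; $d_\varepsilon K$ is $K$ minus the union of all weak$^*$-slices of $K$ of norm diameter $<\varepsilon$; $d_\varepsilon^0K=K$, $d_\varepsilon^{\beta+1}K=d_\varepsilon(d_\varepsilon^\beta K)$, $d_\varepsilon^\beta K=\bigcap_{\mu<\beta}d_\varepsilon^\mu K$ for limit $\beta$. *)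

From Stdlib Require Import Reals List ClassicalEpsilon.
Open Scope R_scope.

(* ---------- Ordinals below omega^omega (Cantor normal form) ----------
   a : Exp represents  ... + omega^k * a k + ... + omega^0 * a 0
   (only finitely supported a are meaningful). *)
Definition Exp := nat -> nat.
Definition exp_fin (a : Exp) : Prop := exists N, forall k, (N <= k)%nat -> a k = 0%nat.
Definition exp_lt (a b : Exp) : Prop :=
  exists k, (a k < b k)%nat /\ forall j, (k < j)%nat -> a j = b j.
Definition exp_zero : Exp := fun _ => 0%nat.
Definition exp_succ (a : Exp) : Exp :=
  fun k => match k with O => S (a O) | _ => a k end.
Definition exp_is_limit (a : Exp) : Prop := a O = 0%nat /\ a <> exp_zero.
Definition exp_omega_pow (n : nat) : Exp := fun k => if Nat.eqb k n then 1%nat else 0%nat.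

(* ---------- Ordinals below omega^(omega^omega) (Cantor normal form) ----------
   p : Pt represents  sum over exponents e (descending) of omega^e * p e. *)
Definition Pt := Exp -> nat.
Definition pt_fin (p : Pt) : Prop :=
  (exists s : list Exp, forall e, ~ In e s -> p e = 0%nat) /\
  (forall e, p e <> 0%nat -> exp_fin e).
Definition pt_lt (p q : Pt) : Prop :=
  exists e, exp_fin e /\ (p e < q e)%nat /\
    forall e', exp_fin e' -> exp_lt e e' -> p e' = q e'.
Definition pt_le (p q : Pt) : Prop := pt_lt p q \/ p = q.
Definition pt_omega_pow (e0 : Exp) : Pt :=
  fun e => if excluded_middle_informative (e = e0) then 1%nat else 0%nat.
Definition gam (a : nat) : Pt := pt_omega_pow (exp_omega_pow a).
Definition dom (g : Pt) (p : Pt) : Prop := pt_fin p /\ pt_le p g.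

Fixpoint lsum (g : Pt -> R) (s : list Pt) : R :=
  match s with nil => 0 | p :: s' => g p + lsum g s' end.
(* unconditional sum over the index set D *)
Definition has_sum (D : Pt -> Prop) (g : Pt -> R) (L : R) : Prop :=
  forall eps, 0 < eps -> exists F0 : list Pt, (forall p, In p F0 -> D p) /\
    forall F, NoDup F -> (forall p, In p F -> D p) -> incl F0 F ->
      Rabs (lsum g F - L) < eps.
Definition l1 (D : Pt -> Prop) (mu : Pt -> R) : Prop :=
  (forall p, ~ D p -> mu p = 0) /\ exists L, has_sum D (fun p => Rabs (mu p)) L.
Definition ball (D : Pt -> Prop) (mu : Pt -> R) : Prop :=
  l1 D mu /\ exists L, has_sum D (fun p => Rabs (mu p)) L /\ L <= 1.

(* order topology on D *)
Definition in_interval (lo hi : option Pt) (p : Pt) : Prop :=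
  match lo with None => True | Some a => pt_lt a p end /\
  match hi with None => True | Some b => pt_lt p b end.
Definition cont_at (D : Pt -> Prop) (x : Pt -> R) (b : Pt) : Prop :=
  forall eps, 0 < eps -> exists lo hi,
    (forall a, lo = Some a -> D a) /\ (forall c, hi = Some c -> D c) /\
    in_interval lo hi b /\
    forall p, D p -> in_interval lo hi p -> Rabs (x p - x b) < eps.
Definition continuous_on (D : Pt -> Prop) (x : Pt -> R) : Prop :=
  forall b, D b -> cont_at D x b.

Definition pairing (D : Pt -> Prop) (mu x : Pt -> R) (L : R) : Prop :=
  has_sum D (fun p => mu p * x p) L.

Definition wslice (D : Pt -> Prop) (K : (Pt -> R) -> Prop) (x : Pt -> R) (t : R)
  : (Pt -> R) -> Prop :=
  fun mu => K mu /\ exists L, pairing D mu x L /\ t < L.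
Definition diam_lt (D : Pt -> Prop) (S : (Pt -> R) -> Prop) (eps : R) : Prop :=
  exists delta, delta < eps /\ forall mu nu, S mu -> S nu ->
    forall L, has_sum D (fun p => Rabs (mu p - nu p)) L -> L <= delta.
Definition deriv (D : Pt -> Prop) (eps : R) (K : (Pt -> R) -> Prop) : (Pt -> R) -> Prop :=
  fun mu => K mu /\
    ~ (exists x t, continuous_on D x /\ (exists nu, wslice D K x t nu) /\
         diam_lt D (wslice D K x t) eps /\ wslice D K x t mu).

Definition deriv_family (D : Pt -> Prop) (eps : R) (K : (Pt -> R) -> Prop)
  (F : Exp -> (Pt -> R) -> Prop) : Prop :=
  (forall mu, F exp_zero mu <-> K mu) /\
  (forall b, exp_fin b -> forall mu, F (exp_succ b) mu <-> deriv D eps (F b) mu) /\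
  (forall b, exp_fin b -> exp_is_limit b ->
     forall mu, F b mu <-> (forall c, exp_fin c -> exp_lt c b -> F c mu)).
Definition deriv_iter (D : Pt -> Prop) (eps : R) (K : (Pt -> R) -> Prop) (b : Exp)
  : (Pt -> R) -> Prop :=
  fun mu => forall F, deriv_family D eps K F -> F b mu.

Definition fpt (b : Pt) : Pt -> R :=
  fun p => if excluded_middle_informative (p = b) then 1 else 0.

From Stdlib Require Import Reals.
From Stdlib Require Import Arith List Lra Lia Permutation Classical ClassicalEpsilon
  FunctionalExtensionality FinFun.
Open Scope R_scope.

(** For [e] an exponent below omega^omega, call a point of
    [[0, g]] divisible by omega^e if all exponents of its Cantor normal form are
    at least [e].  The invariant [averages_in] states that the uniform measure on
    any 2^n such points survives [xi] steps of the derivation [d_(1/2)] of the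
    unit ball whenever [xi <= omega*e + n]; it is proved by transfinite induction
    on [xi].  At a successor [z + 1], every slice through the uniform measure [mu]
    contains another surviving point at distance at least 1/2:
    - if [n > 0], one of the two halves of [mu] (distance 1);
    - if [n = 0], [mu] is a Dirac mass at a point divisible by omega^e, and near
      it there are 2^m points divisible by omega^e' (where z = omega*e' + m,
      e' < e) whose average lies in the slice by continuity (distance 2).
    The theorem is the case [e = omega^alpha], [n = 0], [L = [omega^omega^alpha]]. *)

(** * Ordinals below omega^omega *)

Lemma exp_lt_trans a b c : exp_lt a b -> exp_lt b c -> exp_lt a c.
Proof.
  intros [k1 [H1 A1]] [k2 [H2 A2]].
  destruct (Nat.lt_trichotomy k1 k2) as [Hk|[Hk|Hk]].
  - exists k2. split.
    + rewrite A1 by exact Hk. exact H2.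
    + intros j Hj. rewrite A1 by lia. apply A2; lia.
  - subst k2. exists k1. split; [lia|]. intros j Hj. rewrite A1, A2 by lia. reflexivity.
  - exists k1. split.
    + rewrite <- (A2 k1) by exact Hk. exact H1.
    + intros j Hj. rewrite A1, A2 by lia. reflexivity.
Qed.

Lemma exp_lt_irrefl a : ~ exp_lt a a.
Proof. intros [k [H _]]. lia. Qed.

Lemma exp_trich_from N : forall a b : Exp, (forall k, (N <= k)%nat -> a k = b k) ->
  exp_lt a b \/ a = b \/ exp_lt b a.
Proof.
  induction N as [|N IH]; intros a b H.
  - right; left. apply functional_extensionality. intro k. apply H; lia.
  - destruct (Nat.lt_trichotomy (a N) (b N)) as [h|[h|h]].
    + left. exists N. split; [exact h|]. intros j Hj. apply H; lia.
    + apply IH. intros k Hk. destruct (Nat.eq_dec k N); [subst; exact h|]. apply H; lia.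
    + right; right. exists N. split; [exact h|]. intros j Hj. symmetry; apply H; lia.
Qed.

Lemma exp_trich a b : exp_fin a -> exp_fin b -> exp_lt a b \/ a = b \/ exp_lt b a.
Proof.
  intros [N1 H1] [N2 H2]. apply (exp_trich_from (N1 + N2)).
  intros k Hk. rewrite H1, H2 by lia. reflexivity.
Qed.

Definition exp_le (a b : Exp) : Prop := exp_lt a b \/ a = b.

Lemma exp_lt_le_trans a b c : exp_lt a b -> exp_le b c -> exp_lt a c.
Proof. intros H [H'|H']; [eapply exp_lt_trans; eauto | subst; auto]. Qed.

Lemma exp_le_lt_trans a b c : exp_le a b -> exp_lt b c -> exp_lt a c.
Proof. intros [H|H] H'; [eapply exp_lt_trans; eauto | subst; auto]. Qed.

Definition exp_lt_fin (c xi : Exp) : Prop := exp_fin c /\ exp_fin xi /\ exp_lt c xi.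

Definition exp_bounded (N : nat) (xi : Exp) : Prop := forall k, (N <= k)%nat -> xi k = 0%nat.

Definition exp_erase (N : nat) (xi : Exp) : Exp := fun k => if Nat.eqb k N then 0%nat else xi k.

Lemma exp_lt_bounded N c xi : exp_bounded N xi -> exp_lt c xi -> exp_bounded N c.
Proof.
  intros H [k0 [H1 H2]] k Hk.
  assert (k0 < N)%nat by (destruct (Nat.lt_ge_cases k0 N); auto; rewrite H in H1 by lia; lia).
  rewrite H2 by lia. apply H; lia.
Qed.

Lemma exp_erase_bounded N xi : exp_bounded (S N) xi -> exp_bounded N (exp_erase N xi).
Proof.
  intros H k Hk. unfold exp_erase. destruct (Nat.eqb_spec k N); auto. apply H; lia.
Qed.

Lemma exp_lt_top_cases N c xi : exp_bounded (S N) xi -> exp_lt c xi ->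
  (c N < xi N)%nat \/ (c N = xi N /\ exp_lt_fin (exp_erase N c) (exp_erase N xi)).
Proof.
  intros Hb Hlt.
  pose proof (exp_lt_bounded _ _ _ Hb Hlt) as Hcb.
  destruct Hlt as [k [Hk Hag]].
  assert (k <= N)%nat by (destruct (Nat.le_gt_cases k N); auto; rewrite Hb in Hk by lia; lia).
  destruct (Nat.eq_dec k N) as [->|Hne]; [left; exact Hk|right].
  split; [apply Hag; lia|split; [|split]].
  - exists N. apply exp_erase_bounded; auto.
  - exists N. apply exp_erase_bounded; auto.
  - exists k. unfold exp_erase. destruct (Nat.eqb_spec k N); [lia|]. split; auto.
    intros j Hj. destruct (Nat.eqb_spec j N); auto.
Qed.

Lemma exp_bounded_Acc N : forall xi, exp_bounded N xi -> Acc exp_lt_fin xi.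
Proof.
  induction N as [|N IHN]; intros xi Hxi.
  - constructor. intros c [_ [_ [k [Hk _]]]]. rewrite Hxi in Hk by lia. lia.
  - (* lexicographic induction: on the top coefficient, then on the erased rest *)
    assert (top : forall a xi, exp_bounded (S N) xi -> xi N = a -> Acc exp_lt_fin xi).
    { intro a. induction a as [a IHa] using (well_founded_induction Wf_nat.lt_wf).
      assert (rest : forall eta, Acc exp_lt_fin eta -> forall xi, exp_bounded (S N) xi ->
                 xi N = a -> exp_erase N xi = eta -> Acc exp_lt_fin xi).
      { intros eta Hacc. induction Hacc as [eta _ IHeta]. intros xi0 Hb HN Heta.
        constructor. intros c [_ [_ Hlt]].
        pose proof (exp_lt_bounded _ _ _ Hb Hlt) as Hcb.
        destruct (exp_lt_top_cases N c xi0 Hb Hlt) as [h|[h1 h2]].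
        - apply (IHa (c N)); auto. lia.
        - apply (IHeta (exp_erase N c)); auto; congruence. }
      intros xi0 Hb HN. apply (rest (exp_erase N xi0)); auto.
      apply IHN, exp_erase_bounded; auto. }
    apply (top (xi N)); auto.
Qed.

Lemma exp_lt_fin_wf : well_founded exp_lt_fin.
Proof.
  intro xi. destruct (classic (exp_fin xi)) as [[N H]|H].
  - exact (exp_bounded_Acc N xi H).
  - constructor. intros c [_ [Hf _]]. contradiction.
Qed.

(** [exp_shift e n] is the exponent of the ordinal omega*e + n. *)
Definition exp_shift (e : Exp) (n : nat) : Exp :=
  fun k => match k with O => n | S k' => e k' end.

(** [exp_tail z] is the exponent e with z = omega*e + z 0. *)
Definition exp_tail (z : Exp) : Exp := fun k => z (S k).

Lemma exp_shift_tail z : exp_shift (exp_tail z) (z O) = z.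
Proof. apply functional_extensionality. intros [|k]; reflexivity. Qed.

Lemma exp_shift_fin e n : exp_fin e -> exp_fin (exp_shift e n).
Proof. intros [N H]. exists (S N). intros [|k] Hk; [lia|]. apply H. lia. Qed.

Lemma exp_tail_fin z : exp_fin z -> exp_fin (exp_tail z).
Proof. intros [N H]. exists N. intros k Hk. apply H. lia. Qed.

Lemma exp_lt_succ z : exp_lt z (exp_succ z).
Proof. exists O. simpl. split; [lia|]. intros [|j] Hj; [lia|auto]. Qed.

Lemma exp_succ_le_shift_S z e n :
  exp_le (exp_succ z) (exp_shift e (S n)) -> exp_le z (exp_shift e n).
Proof.
  intros [[k [H1 H2]]|H].
  - left. exists k. split.
    + destruct k; simpl in *; lia.
    + intros [|j] Hj; [lia|]. exact (H2 (S j) Hj).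
  - right. apply functional_extensionality. intro k.
    assert (h := f_equal (fun f => f k) H). destruct k; simpl in *; [lia|auto].
Qed.

Lemma exp_succ_le_shift_0 z e :
  exp_le (exp_succ z) (exp_shift e O) -> exp_lt (exp_tail z) e.
Proof.
  intros [[k [H1 H2]]|H].
  - destruct k as [|k]; [simpl in H1; lia|].
    exists k. split; [exact H1|]. intros j Hj. apply (H2 (S j)). lia.
  - exfalso. assert (h := f_equal (fun f => f O) H). simpl in h. lia.
Qed.

Lemma exp_cases xi : exp_fin xi ->
  xi = exp_zero \/ exp_is_limit xi \/ exists z, exp_fin z /\ xi = exp_succ z.
Proof.
  intro Hfin. destruct (classic (xi = exp_zero)) as [Hz|Hnz]; [left; exact Hz|right].
  destruct (xi O) as [|m] eqn:Hx0; [left; split; auto|right].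
  exists (exp_shift (exp_tail xi) m). split.
  - apply exp_shift_fin, exp_tail_fin; auto.
  - apply functional_extensionality. intros [|k]; simpl; auto.
Qed.

(** * Ordinals below omega^omega^omega *)

Lemma pt_lt_trans p q r : pt_lt p q -> pt_lt q r -> pt_lt p r.
Proof.
  intros [e1 [F1 [H1 A1]]] [e2 [F2 [H2 A2]]].
  destruct (exp_trich e1 e2 F1 F2) as [h|[h|h]].
  - exists e2. split; [auto|split].
    + rewrite A1 by auto. exact H2.
    + intros e' Fe' He'. rewrite A1, A2; auto. eapply exp_lt_trans; eauto.
  - subst e2. exists e1. split; [auto|split]; [lia|].
    intros e' Fe' He'. rewrite A1, A2; auto.
  - exists e1. split; [auto|split].
    + rewrite <- (A2 e1) by auto. exact H1.
    + intros e' Fe' He'. rewrite A1, A2; auto. eapply exp_lt_trans; eauto.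
Qed.

Lemma pt_lt_irrefl p : ~ pt_lt p p.
Proof. intros [e [_ [H _]]]. lia. Qed.

Lemma pt_lt_le_trans p q r : pt_lt p q -> pt_le q r -> pt_lt p r.
Proof. intros H [H'|H']; [eapply pt_lt_trans; eauto | subst; auto]. Qed.

Definition divisible (e : Exp) (b : Pt) : Prop :=
  (exists e0, b e0 <> 0%nat) /\ forall e', b e' <> 0%nat -> exp_le e e'.

Lemma pt_max_exp (b : Pt) (s : list Exp) : (forall e, b e <> 0%nat -> exp_fin e) ->
  (exists e0, In e0 s /\ b e0 <> 0%nat) ->
  exists m, b m <> 0%nat /\ forall e, In e s -> b e <> 0%nat -> exp_le e m.
Proof.
  intros Hf. induction s as [|x s IH]; intros [e0 [Hin Hnz]]; [destruct Hin|].
  destruct (classic (exists e1, In e1 s /\ b e1 <> 0%nat)) as [Hex|Hno].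
  - destruct (IH Hex) as [m [Hm Hm2]].
    destruct (Nat.eq_dec (b x) 0) as [Hx|Hx].
    + exists m. split; auto. intros e [->|He] Hne; [contradiction|auto].
    + destruct (exp_trich x m (Hf _ Hx) (Hf _ Hm)) as [h|[h|h]].
      * exists m. split; auto. intros e [->|He] Hne; [left; auto|auto].
      * subst. exists m. split; auto. intros e [->|He] Hne; [right; auto|auto].
      * exists x. split; auto. intros e [->|He] Hne; [right; auto|].
        left. eapply exp_le_lt_trans; eauto.
  - assert (x = e0) as <- by (destruct Hin as [->|Hin]; auto; exfalso; eauto).
    exists x. split; auto. intros e [->|He] Hne; [right; auto|]. exfalso; eauto.
Qed.

Definition pt_zero : Pt := fun _ => 0%nat.

Lemma pt_zero_fin : pt_fin pt_zero.
Proof. split; [exists nil; auto | intros e H; exfalso; apply H; reflexivity]. Qed.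

Lemma pt_zero_lt b : pt_fin b -> (exists e0, b e0 <> 0%nat) -> pt_lt pt_zero b.
Proof.
  intros [[s Hs] Hf] [e0 He0].
  assert (Hsupp : forall e, b e <> 0%nat -> In e s)
    by (intros e He; apply NNPP; intro; apply He; auto).
  destruct (pt_max_exp b s Hf) as [m [Hm Hm2]]; [eauto|].
  exists m. split; [auto|split]; [unfold pt_zero; lia|].
  intros e' Fe' He'. unfold pt_zero. symmetry. apply NNPP. intro h.
  destruct (Hm2 e' (Hsupp e' h) h) as [h2|h2].
  - apply (exp_lt_irrefl m). eapply exp_lt_trans; eauto.
  - subst. exact (exp_lt_irrefl _ He').
Qed.

(** [pt_raise a e' j] keeps the part of [a] with exponents above [e'], raises the
    coefficient of omega^e' by [j+1] and erases everything below: it is a point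
    just above [a] that is divisible by omega^e'. *)
Definition pt_raise (a : Pt) (e' : Exp) (j : nat) : Pt := fun d =>
  if excluded_middle_informative (exp_lt d e') then 0%nat
  else if excluded_middle_informative (d = e') then (a d + S j)%nat else a d.

Lemma pt_raise_at a e' j : pt_raise a e' j e' = (a e' + S j)%nat.
Proof.
  unfold pt_raise. destruct (excluded_middle_informative (exp_lt e' e')) as [h|_].
  - exfalso; exact (exp_lt_irrefl _ h).
  - destruct (excluded_middle_informative (e' = e')); congruence.
Qed.

Lemma pt_raise_above a e' j d : exp_lt e' d -> pt_raise a e' j d = a d.
Proof.
  intro H. unfold pt_raise.
  destruct (excluded_middle_informative (exp_lt d e')) as [h|_].
  - exfalso. apply (exp_lt_irrefl d). eapply exp_lt_trans; eauto.
  - destruct (excluded_middle_informative (d = e')) as [h|_]; auto.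
    subst. exfalso; exact (exp_lt_irrefl _ H).
Qed.

Lemma pt_raise_fin a e' j : pt_fin a -> exp_fin e' -> pt_fin (pt_raise a e' j).
Proof.
  intros [[s Hs] Hf] Fe'. unfold pt_raise. split.
  - exists (e' :: s). intros d Hd.
    destruct (excluded_middle_informative (exp_lt d e')); auto.
    destruct (excluded_middle_informative (d = e')) as [h|h].
    + exfalso; apply Hd; left; auto.
    + apply Hs. intro; apply Hd; right; auto.
  - intros d Hd.
    destruct (excluded_middle_informative (exp_lt d e')); [lia|].
    destruct (excluded_middle_informative (d = e')) as [h|h]; [subst; auto|auto].
Qed.

Lemma pt_raise_divisible a e' j : pt_fin a -> exp_fin e' -> divisible e' (pt_raise a e' j).
Proof.
  intros Ha Fe'. split.
  - exists e'. rewrite pt_raise_at. lia.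
  - intros d Hd. assert (Fd : exp_fin d) by (apply (proj2 (pt_raise_fin a e' j Ha Fe')); auto).
    unfold pt_raise in Hd. destruct (excluded_middle_informative (exp_lt d e')); [lia|].
    destruct (exp_trich e' d Fe' Fd) as [h|[h|h]]; [left; auto|right; auto|contradiction].
Qed.

Lemma pt_raise_gt a e' j : exp_fin e' -> pt_lt a (pt_raise a e' j).
Proof.
  intros Fe'. exists e'. split; [auto|split].
  - rewrite pt_raise_at. lia.
  - intros d Fd Hd. rewrite pt_raise_above; auto.
Qed.

Lemma pt_raise_lt a e e' j b : exp_lt e' e -> divisible e b -> pt_lt a b ->
  pt_lt (pt_raise a e' j) b.
Proof.
  intros He [_ Hd] [es [Fes [H1 H2]]].
  assert (Hl : exp_lt e' es).
  { assert (b es <> 0%nat) by lia. eapply exp_lt_le_trans; eauto. }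
  exists es. split; [auto|split].
  - rewrite pt_raise_above; auto.
  - intros d Fd Hd'. rewrite pt_raise_above; [auto|]. eapply exp_lt_trans; eauto.
Qed.

Lemma pt_raise_inj a e' : Injective (pt_raise a e').
Proof.
  intros i j H. assert (E : pt_raise a e' i e' = pt_raise a e' j e') by (rewrite H; auto).
  rewrite !pt_raise_at in E. lia.
Qed.

(** A point [b] divisible by omega^e is a limit of points divisible by omega^e'
    for [e' < e]: every order-neighbourhood of [b] contains arbitrarily many of
    them below [b]. *)
Lemma points_near g b e e' (lo hi : option Pt) K :
  dom g b -> divisible e b -> exp_fin e' -> exp_lt e' e ->
  (forall a, lo = Some a -> dom g a) -> in_interval lo hi b ->
  exists L, NoDup L /\ length L = K /\
    forall p, In p L -> dom g p /\ divisible e' p /\ in_interval lo hi p /\ pt_lt p b.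
Proof.
  intros [Hbf Hbg] Hdiv Fe' He Hlo [Hi1 Hi2].
  set (a := match lo with Some a => a | None => pt_zero end).
  assert (Haf : pt_fin a) by (unfold a; destruct lo as [a0|]; [apply (Hlo a0 eq_refl)|apply pt_zero_fin]).
  assert (Hab : pt_lt a b) by (unfold a; destruct lo; [exact Hi1|apply pt_zero_lt; auto; apply Hdiv]).
  exists (map (pt_raise a e') (seq 0 K)). split; [|split].
  - apply Injective_map_NoDup; [apply pt_raise_inj|apply seq_NoDup].
  - rewrite length_map, length_seq. auto.
  - intros p Hp. apply in_map_iff in Hp. destruct Hp as [j [<- _]].
    assert (Hlt : pt_lt (pt_raise a e' j) b) by (eapply pt_raise_lt; eauto).
    split; [split|split; [|split; [split|]]]; auto.
    + apply pt_raise_fin; auto.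
    + left. eapply pt_lt_le_trans; eauto.
    + apply pt_raise_divisible; auto.
    + unfold a in *. destruct lo; auto. apply pt_raise_gt; auto.
    + destruct hi; auto. eapply pt_lt_trans; eauto.
Qed.

(** * Finite sums and [has_sum] *)

Lemma NoDup_app_disjoint (A : Type) (L1 L2 : list A) p :
  NoDup (L1 ++ L2) -> In p L1 -> ~ In p L2.
Proof.
  intros HN H1 H2. destruct (in_split p L2 H2) as [l [l' ->]].
  apply (NoDup_remove_2 (L1 ++ l) l' p); [rewrite <- app_assoc; exact HN|].
  rewrite !in_app_iff. auto.
Qed.

Lemma lsum_app g A B : lsum g (A ++ B) = lsum g A + lsum g B.
Proof. induction A; simpl; [lra|rewrite IHA; lra]. Qed.

Lemma lsum_ext_in g h S : (forall p, In p S -> g p = h p) -> lsum g S = lsum h S.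
Proof.
  induction S as [|x S IH]; intros H; simpl; auto.
  rewrite H by (left; auto). rewrite IH; auto. intros p Hp; apply H; right; auto.
Qed.

Lemma lsum_const c S : lsum (fun _ => c) S = INR (length S) * c.
Proof. induction S; simpl length; [simpl; lra|rewrite S_INR; simpl; rewrite IHS; lra]. Qed.

Lemma lsum_scale c g S : lsum (fun p => c * g p) S = c * lsum g S.
Proof. induction S; simpl; [lra|rewrite IHS; lra]. Qed.

Lemma lsum_perm g S S' : Permutation S S' -> lsum g S = lsum g S'.
Proof. induction 1; simpl; lra. Qed.

Lemma lsum_gt g t S : S <> nil -> (forall p, In p S -> t < g p) -> INR (length S) * t < lsum g S.
Proof.
  induction S as [|q S IH]; intros Hn Hp; [congruence|].
  simpl length. rewrite S_INR. simpl lsum.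
  assert (t < g q) by (apply Hp; left; auto).
  destruct S as [|q' S]; [simpl; lra|].
  assert (INR (length (q' :: S)) * t < lsum g (q' :: S))
    by (apply IH; [congruence|intros; apply Hp; right; auto]).
  lra.
Qed.

(** A summand vanishing off a duplicate-free list [S] has sum over any larger
    duplicate-free list equal to its sum over [S]: reorder the larger list as [S]
    followed by the points outside [S]. *)
Lemma lsum_supported g S F : NoDup S -> NoDup F -> incl S F ->
  (forall p, ~ In p S -> g p = 0) -> lsum g F = lsum g S.
Proof.
  intros HS HF Hinc Hz.
  set (outside := fun p => if excluded_middle_informative (In p S) then false else true).
  assert (Hout : forall p, In p (filter outside F) <-> In p F /\ ~ In p S).
  { intro p. rewrite filter_In. unfold outside.
    destruct (excluded_middle_informative (In p S)); intuition congruence. }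
  assert (Hperm : Permutation F (S ++ filter outside F)).
  { apply NoDup_Permutation; auto.
    - apply NoDup_app; [auto|apply NoDup_filter; auto|].
      intros p Hp Hp'. apply Hout in Hp'. tauto.
    - intro p. rewrite in_app_iff, Hout. split; [|intros [?|[?]]; auto].
      intro Hp. destruct (excluded_middle_informative (In p S)); tauto. }
  rewrite (lsum_perm g _ _ Hperm), lsum_app.
  rewrite (lsum_ext_in g (fun _ => 0) (filter outside F)) by (intros p Hp; apply Hz, Hout; auto).
  rewrite lsum_const. lra.
Qed.

Lemma has_sum_finite (D : Pt -> Prop) g S : (forall p, In p S -> D p) -> NoDup S ->
  (forall p, ~ In p S -> g p = 0) -> has_sum D g (lsum g S).
Proof.
  intros HD HN Hz eps Heps. exists S. split; auto.
  intros F HF _ Hinc. rewrite (lsum_supported g S F); auto.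
  rewrite Rminus_diag, Rabs_R0. auto.
Qed.

Lemma has_sum_unique D g L1 L2 : has_sum D g L1 -> has_sum D g L2 -> L1 = L2.
Proof.
  intros H1 H2. destruct (Req_dec L1 L2) as [|Hne]; auto. exfalso.
  set (eps := Rabs (L1 - L2) / 2).
  assert (Heps : 0 < eps) by (unfold eps; assert (L1 - L2 <> 0) by lra; pose proof (Rabs_pos_lt _ H); lra).
  destruct (H1 eps Heps) as [F1 [D1 G1]]. destruct (H2 eps Heps) as [F2 [D2 G2]].
  set (F := nodup (fun x y : Pt => excluded_middle_informative (x = y)) (F1 ++ F2)).
  assert (HFD : forall p, In p F -> D p)
    by (intros p Hp; apply nodup_In, in_app_or in Hp; destruct Hp; auto).
  assert (I1 : incl F1 F) by (intros p Hp; apply nodup_In, in_or_app; auto).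
  assert (I2 : incl F2 F) by (intros p Hp; apply nodup_In, in_or_app; auto).
  pose proof (G1 F (NoDup_nodup _ _) HFD I1) as A1.
  pose proof (G2 F (NoDup_nodup _ _) HFD I2) as A2.
  unfold eps in *. apply Rabs_def2 in A1. apply Rabs_def2 in A2.
  unfold Rabs in *. destruct (Rcase_abs (L1 - L2)); lra.
Qed.

(** * Uniform probability measures on finite sets of points *)

Definition unif (L : list Pt) : Pt -> R := fun p =>
  if excluded_middle_informative (In p L) then / INR (length L) else 0.

Lemma unif_in L p : In p L -> unif L p = / INR (length L).
Proof. intro H. unfold unif. destruct (excluded_middle_informative (In p L)); tauto. Qed.

Lemma unif_out L p : ~ In p L -> unif L p = 0.
Proof. intro H. unfold unif. destruct (excluded_middle_informative (In p L)); tauto. Qed.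

Lemma unif_single b : unif (b :: nil) = fpt b.
Proof.
  apply functional_extensionality. intro p. unfold fpt.
  destruct (excluded_middle_informative (p = b)) as [->|h].
  - rewrite unif_in by (left; auto). simpl. lra.
  - apply unif_out. intros [->|[]]. auto.
Qed.

Lemma unif_app_comm L1 L2 : unif (L1 ++ L2) = unif (L2 ++ L1).
Proof.
  apply functional_extensionality. intro p. unfold unif.
  rewrite !length_app, Nat.add_comm.
  destruct (excluded_middle_informative (In p (L1 ++ L2))) as [a1|a1];
  destruct (excluded_middle_informative (In p (L2 ++ L1))) as [a2|a2]; auto;
  exfalso; rewrite !in_app_iff in *; tauto.
Qed.

Lemma length_pos (L : list Pt) : L <> nil -> 0 < INR (length L).
Proof. intro H. destruct L; [congruence|]. apply lt_0_INR. simpl. auto with arith. Qed.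

Lemma unif_ball D L : (forall p, In p L -> D p) -> NoDup L -> L <> nil -> ball D (unif L).
Proof.
  intros HD HN Hne. pose proof (length_pos L Hne) as Hpos.
  assert (Hs : has_sum D (fun p => Rabs (unif L p)) (lsum (fun p => Rabs (unif L p)) L)).
  { apply has_sum_finite; auto. intros p Hp. rewrite unif_out, Rabs_R0; auto. }
  assert (Hv : lsum (fun p => Rabs (unif L p)) L = 1).
  { rewrite (lsum_ext_in _ (fun _ => / INR (length L))), lsum_const.
    - field. lra.
    - intros p Hp. rewrite unif_in by auto. apply Rabs_right. left. apply Rinv_0_lt_compat; auto. }
  split; [split|].
  - intros p Hp. apply unif_out. intro; apply Hp; auto.
  - eauto.
  - exists 1. rewrite <- Hv. split; auto. lra.
Qed.

Definition mean (x : Pt -> R) (L : list Pt) : R := / INR (length L) * lsum x L.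

Lemma unif_pairing D L x : (forall p, In p L -> D p) -> NoDup L -> pairing D (unif L) x (mean x L).
Proof.
  intros HD HN. unfold mean. rewrite <- lsum_scale.
  rewrite (lsum_ext_in _ (fun p => unif L p * x p)) by (intros p Hp; rewrite unif_in; auto).
  apply has_sum_finite; auto. intros p Hp. rewrite unif_out; auto. lra.
Qed.

Lemma mean_app x L1 L2 : length L1 = length L2 -> L1 <> nil ->
  mean x (L1 ++ L2) = / 2 * (mean x L1 + mean x L2).
Proof.
  intros Hl Hne. pose proof (length_pos L1 Hne).
  unfold mean. rewrite lsum_app, length_app, plus_INR, <- Hl. field. lra.
Qed.

Lemma mean_gt x t L : L <> nil -> (forall p, In p L -> t < x p) -> t < mean x L.
Proof.
  intros Hne Hp. pose proof (length_pos L Hne). pose proof (lsum_gt x t L Hne Hp).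
  unfold mean. apply (Rmult_lt_reg_l (INR (length L))); auto.
  rewrite <- Rmult_assoc, Rinv_r by lra. lra.
Qed.

Lemma unif_dist_half D L1 L2 : (forall p, In p (L1 ++ L2) -> D p) -> NoDup (L1 ++ L2) ->
  length L1 = length L2 -> L1 <> nil ->
  has_sum D (fun p => Rabs (unif (L1 ++ L2) p - unif L1 p)) 1.
Proof.
  intros HD HN Hl Hne. pose proof (length_pos L1 Hne) as P1.
  set (c := / (2 * INR (length L1))).
  assert (Hc : 0 < c) by (apply Rinv_0_lt_compat; lra).
  assert (Hlen : / INR (length (L1 ++ L2)) = c)
    by (unfold c; rewrite length_app, plus_INR, <- Hl; f_equal; ring).
  replace 1 with (lsum (fun p => Rabs (unif (L1 ++ L2) p - unif L1 p)) (L1 ++ L2)).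
  - apply has_sum_finite; auto. intros p Hp.
    rewrite !unif_out, Rminus_diag, Rabs_R0; auto. rewrite in_app_iff in Hp. tauto.
  - rewrite (lsum_ext_in _ (fun _ => c)), lsum_const, length_app, plus_INR, <- Hl.
    + unfold c. field. lra.
    + intros p Hp. rewrite unif_in, Hlen by auto.
      destruct (in_app_or _ _ _ Hp) as [h|h].
      * rewrite unif_in by auto. replace (c - / INR (length L1)) with (- c) by (unfold c; field; lra).
        rewrite Rabs_Ropp. apply Rabs_right. lra.
      * rewrite unif_out, Rminus_0_r by (intro h'; exact (NoDup_app_disjoint _ _ _ _ HN h' h)).
        apply Rabs_right. lra.
Qed.

Lemma unif_dist_point D b L : D b -> (forall p, In p L -> D p) -> NoDup L -> ~ In b L ->
  L <> nil -> has_sum D (fun p => Rabs (unif (b :: nil) p - unif L p)) 2.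
Proof.
  intros Hb HD HN Hbn Hne. pose proof (length_pos L Hne) as P1.
  replace 2 with (lsum (fun p => Rabs (unif (b :: nil) p - unif L p)) (b :: L)).
  - apply has_sum_finite.
    + intros p [->|Hp]; auto.
    + constructor; auto.
    + intros p Hp. rewrite !unif_out, Rminus_diag, Rabs_R0; auto.
      * intro; apply Hp; right; auto.
      * intros [->|[]]. apply Hp. left; auto.
  - simpl lsum. rewrite unif_in, (unif_out L) by (auto; left; auto).
    rewrite (lsum_ext_in _ (fun _ => / INR (length L))), lsum_const.
    + simpl INR. rewrite Rabs_right by lra. field. lra.
    + intros p Hp. rewrite unif_out, unif_in, Rminus_0_l, Rabs_Ropp by (auto; intros [->|[]]; auto).
      apply Rabs_right. left. apply Rinv_0_lt_compat. auto.
Qed.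

Lemma unif_half_above D x t L1 L2 : (forall p, In p (L1 ++ L2) -> D p) ->
  NoDup (L1 ++ L2) -> length L1 = length L2 -> L1 <> nil -> t < mean x (L1 ++ L2) ->
  exists M, (M = L1 \/ M = L2) /\ t < mean x M /\
    has_sum D (fun p => Rabs (unif (L1 ++ L2) p - unif M p)) 1.
Proof.
  intros HD HN Hl Hne Ht. rewrite mean_app in Ht by auto.
  destruct (Rlt_or_le t (mean x L1)) as [h|h].
  - exists L1. split; [left|split]; auto. apply unif_dist_half; auto.
  - exists L2. split; [right|split]; [auto|lra|].
    assert (HN' : NoDup (L2 ++ L1))
      by (apply (Permutation_NoDup (Permutation_app_comm L1 L2)); auto).
    rewrite unif_app_comm. apply unif_dist_half; auto.
    + intros p Hp. apply HD. rewrite in_app_iff in *. tauto.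
    + intros ->. destruct L1; simpl in Hl; congruence.
Qed.

Definition far_in_slice (D : Pt -> Prop) (K : (Pt -> R) -> Prop) (mu x : Pt -> R)
    (t eps : R) : Prop :=
  exists nu Lnu d, K nu /\ pairing D nu x Lnu /\ t < Lnu /\
    has_sum D (fun p => Rabs (mu p - nu p)) d /\ eps <= d.

Lemma deriv_of_far_slices D eps K mu : K mu ->
  (forall x t Lmu, continuous_on D x -> pairing D mu x Lmu -> t < Lmu ->
     far_in_slice D K mu x t eps) ->
  deriv D eps K mu.
Proof.
  intros HK Hfar. split; auto.
  intros [x [t [Hcont [_ [[delta [Hd Hdiam]] [_ [Lmu [Hpair Ht]]]]]]]].
  destruct (Hfar x t Lmu Hcont Hpair Ht) as [nu [Lnu [d [HKnu [Hpnu [Htnu [Hsum Hd']]]]]]].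
  assert (d <= delta) by (apply (Hdiam mu nu); [split; eauto | split; eauto | exact Hsum]).
  lra.
Qed.

(** * The main invariant *)

Lemma length_pow2_nonnil (L : list Pt) n : length L = (2 ^ n)%nat -> L <> nil.
Proof. intros H ->. simpl in H. pose proof (Nat.pow_nonzero 2 n). lia. Qed.

Section Invariant.

Variable g : Pt.
Variable F : Exp -> (Pt -> R) -> Prop.
Hypothesis HF : deriv_family (dom g) (1/2) (ball (dom g)) F.

Definition averages_in (xi : Exp) : Prop :=
  forall e n L, exp_fin e -> NoDup L -> length L = (2 ^ n)%nat ->
    (forall b, In b L -> dom g b /\ divisible e b) ->
    exp_le xi (exp_shift e n) -> F xi (unif L).

Lemma averages_zero : averages_in exp_zero.
Proof.
  intros e n L _ HN Hlen HL _. apply (proj1 HF), unif_ball; auto.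
  - intros p Hp. apply HL; auto.
  - exact (length_pow2_nonnil L n Hlen).
Qed.

Lemma averages_limit xi : exp_fin xi -> exp_is_limit xi ->
  (forall c, exp_fin c -> exp_lt c xi -> averages_in c) -> averages_in xi.
Proof.
  intros Hfin Hlim IH e n L Fe HN Hlen HL Hle.
  apply (proj2 (proj2 HF) xi Hfin Hlim). intros c Hc Hlt.
  apply (IH c Hc Hlt e n L); auto. left. eapply exp_lt_le_trans; eauto.
Qed.

(** A Dirac mass at [b], divisible by omega^e, escapes slices at the level
    [z + 1 <= omega*e]: near [b] there are [2^(z 0)] points divisible by
    omega^(tail z) whose average survives [z] derivations, lies in the slice by
    continuity of [x], and is at distance 2 from the Dirac mass. *)
Lemma far_from_point z e b x t : exp_fin z -> averages_in z ->
  dom g b -> divisible e b -> exp_le (exp_succ z) (exp_shift e 0) ->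
  continuous_on (dom g) x -> t < x b ->
  far_in_slice (dom g) (F z) (unif (b :: nil)) x t (1/2).
Proof.
  intros Hz IH Hb Hdiv Hle Hcont Ht.
  destruct (Hcont b Hb (x b - t) ltac:(lra)) as [lo [hi [Hlo [_ [Hin Hx]]]]].
  destruct (points_near g b e (exp_tail z) lo hi (2 ^ z O)%nat Hb Hdiv
              (exp_tail_fin z Hz) (exp_succ_le_shift_0 z e Hle) Hlo Hin)
    as [L [HN [Hlen HL]]].
  assert (HD : forall p, In p L -> dom g p) by (intros p Hp; apply HL; auto).
  pose proof (length_pow2_nonnil L _ Hlen) as Hne.
  exists (unif L), (mean x L), 2. split; [|split; [|split; [|split]]].
  - apply (IH (exp_tail z) (z O) L); auto.
    + apply exp_tail_fin; auto.
    + intros p Hp. split; apply HL; auto.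
    + right. symmetry. apply exp_shift_tail.
  - apply unif_pairing; auto.
  - apply mean_gt; auto. intros q Hq. destruct (HL q Hq) as [Hqd [_ [Hqi _]]].
    specialize (Hx q Hqd Hqi). apply Rabs_def2 in Hx. lra.
  - apply unif_dist_point; auto.
    intro h. destruct (HL b h) as [_ [_ [_ h2]]]. exact (pt_lt_irrefl _ h2).
  - lra.
Qed.

(** The average over [2^(n+1)] points escapes slices at the level
    [z + 1 <= omega*e + (n+1)]: one of its halves lies in the slice, survives
    [z] derivations, and is at distance 1. *)
Lemma far_from_halves z e n L1 L2 x t : averages_in z -> exp_fin e ->
  NoDup (L1 ++ L2) -> length L1 = (2 ^ n)%nat -> length L2 = (2 ^ n)%nat ->
  (forall b, In b (L1 ++ L2) -> dom g b /\ divisible e b) ->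
  exp_le z (exp_shift e n) -> t < mean x (L1 ++ L2) ->
  far_in_slice (dom g) (F z) (unif (L1 ++ L2)) x t (1/2).
Proof.
  intros IH Fe HN Hl1 Hl2 HL Hle Ht.
  assert (HD : forall p, In p (L1 ++ L2) -> dom g p) by (intros p Hp; apply HL; auto).
  destruct (unif_half_above (dom g) x t L1 L2) as [M [HM [HtM Hdist]]]; auto.
  { congruence. }
  { exact (length_pow2_nonnil L1 n Hl1). }
  assert (HMsub : incl M (L1 ++ L2))
    by (destruct HM as [->| ->]; [apply incl_appl|apply incl_appr]; apply incl_refl).
  assert (HMD : forall p, In p M -> dom g p) by auto.
  assert (HMN : NoDup M)
    by (destruct HM as [->| ->]; [eapply NoDup_app_remove_r|eapply NoDup_app_remove_l]; eauto).
  exists (unif M), (mean x M), 1. split; [|split; [|split; [|split]]]; auto; try lra.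
  - apply (IH e n M); auto. destruct HM as [->| ->]; auto.
  - apply unif_pairing; auto.
Qed.

Lemma averages_succ z : exp_fin z -> averages_in z -> averages_in (exp_succ z).
Proof.
  intros Hz IH e n L Fe HN Hlen HL Hle.
  assert (HD : forall p, In p L -> dom g p) by (intros p Hp; apply HL; auto).
  apply (proj1 (proj2 HF) z Hz). apply deriv_of_far_slices.
  { apply (IH e n L); auto. left. eapply exp_lt_le_trans; [apply exp_lt_succ|exact Hle]. }
  intros x t Lmu Hcont Hpair Ht.
  rewrite (has_sum_unique _ _ _ _ Hpair (unif_pairing _ L x HD HN)) in Ht.
  destruct n as [|n].
  - destruct L as [|b [|b' L]]; simpl in Hlen; try lia.
    apply (far_from_point z e); try (apply HL; left); auto.
    unfold mean in Ht. simpl in Ht. rewrite Rinv_1, Rmult_1_l, Rplus_0_r in Ht. exact Ht.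
  - assert (Hl1 : length (firstn (2 ^ n) L) = (2 ^ n)%nat)
      by (rewrite length_firstn; simpl in Hlen; lia).
    assert (Hl2 : length (skipn (2 ^ n) L) = (2 ^ n)%nat)
      by (rewrite length_skipn; simpl in Hlen; lia).
    rewrite <- (firstn_skipn (2 ^ n) L) in HN, HL, Ht |- *.
    apply (far_from_halves z e n); auto.
    apply exp_succ_le_shift_S; auto.
Qed.

Lemma averages_everywhere xi : exp_fin xi -> averages_in xi.
Proof.
  induction xi as [xi IH] using (well_founded_induction exp_lt_fin_wf). intro Hfin.
  destruct (exp_cases xi Hfin) as [->|[Hlim|[z [Hz ->]]]].
  - apply averages_zero.
  - apply averages_limit; auto. intros c Hc Hlt. apply IH; auto. split; auto.
  - apply averages_succ; auto. apply IH; auto. repeat split; auto. apply exp_lt_succ.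
Qed.

End Invariant.

Lemma exp_omega_pow_fin a : exp_fin (exp_omega_pow a).
Proof.
  exists (S a). intros k Hk. unfold exp_omega_pow. destruct (Nat.eqb_spec k a); [lia|auto].
Qed.

Lemma exp_omega_pow_succ a : exp_omega_pow (1 + a) = exp_shift (exp_omega_pow a) 0.
Proof. apply functional_extensionality. intros [|k]; reflexivity. Qed.

Lemma gam_support a e : gam a e <> 0%nat -> e = exp_omega_pow a.
Proof.
  unfold gam, pt_omega_pow. destruct (excluded_middle_informative (e = exp_omega_pow a)); auto.
  lia.
Qed.

Lemma gam_in_dom a : dom (gam a) (gam a).
Proof.
  split; [split|right; auto].
  - exists (exp_omega_pow a :: nil). intros e He. apply NNPP. intro Hnz.
    apply He. left. symmetry. apply gam_support; auto.
  - intros e He. rewrite (gam_support a e He). apply exp_omega_pow_fin.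
Qed.

Lemma gam_divisible a : divisible (exp_omega_pow a) (gam a).
Proof.
  split.
  - exists (exp_omega_pow a). unfold gam, pt_omega_pow.
    destruct (excluded_middle_informative _); congruence.
  - intros e He. right. symmetry. apply gam_support; auto.
Qed.

Theorem mainTheorem10 : forall alpha : nat,
  deriv_iter (dom (gam alpha)) (1/2) (ball (dom (gam alpha)))
    (exp_omega_pow (1 + alpha)) (fpt (gam alpha)).
Proof.
  intros alpha F HF. rewrite <- unif_single.
  apply (averages_everywhere (gam alpha) F HF _ (exp_omega_pow_fin _)
           (exp_omega_pow alpha) 0%nat).
  - apply exp_omega_pow_fin.
  - repeat constructor. intros [].
  - reflexivity.
  - intros b [<-|[]]. split; [apply gam_in_dom|apply gam_divisible].
  - right. apply exp_omega_pow_succ.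
Qed.
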